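(* Let $(K,C,S)$ be the associated layered complex of a divided complex $(K,S^0)$, and let $(K,C,S)\searrow(K-\{f,p\},C,S)$ be an elementary intermediate collapse of a principal simplex $p\in\mathrm{IM}(K,C,S)$ using the free face $f$. Then the freely orthogonal deformation retraction $H:|K|\times I\to|K|$ associated to $p$ and $f$ satisfies $H_t(|K|-|S|)\subseteq|K|-|S|$ and $H_t(|S|)\subseteq|S|$ for all $t\in I$.
   Context: A simplicial complex is a set of finite nonempty sets (simplices) closed under passing to nonempty subsets (faces); $K^0$ is its vertex set; $t<s$ means proper face; $|K|$ is the geometric realization and $|s|$ the closed geometric simplex. A simplex is principal in $K$ if it is not a proper face of any simplex of $K$; $f$ is free in $K$ if it is a proper face of a principal simplex $p$ and of no other simplex of $K$. A layered simplicial complex is $(K,C,S)$ with $C,S$ disjoint subcomplexes; $\mathrm{IM}(K,C,S)$ are the simplices in neither $C$ nor $S$. A divided complex is $(K,S^0)$, $S^0\subseteq K^0$; its associated layered complex has $S$ = simplices with all vertices in $S^0$, $C$ = simplices with all vertices in $K^0-S^0$. An elementary intermediate collapse removes $f,p$ where (i) $p\in\mathrm{IM}(K,C,S)$, (ii) $p$ is principal in $K$, (iii) $f$ is a face of $p$ free in $K$, (iv) every $t\in S$ with $t<p$ satisfies $t<f$. Freely orthogonal deformation retraction: with $v$ the vertex of $p$ not in $f$ and $f_1,\dots,f_m$ the vertices of $f$ ($m\ge1$), identify $|p|$ with $\{x\in\mathbb R^m:x_i\ge0,\sum x_i\le1\}$ ($v\mapsto0$, $f_i\mapsto e_i$); set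 $r(x)=(x_1-x_j,\dots,x_m-x_j)$ with $x_j=\min_i x_i$, and $H(x,t)=(1-t)x+t\,r(x)$ for $x\in|p|$, $H(x,t)=x$ for $x\in|K|-|p|$; $H_t=H(\cdot,t)$. *)

From HB Require Import structures.
From mathcomp Require Import all_boot all_order all_algebra.
From mathcomp Require Import boolp reals.
Set Implicit Arguments. Unset Strict Implicit. Unset Printing Implicit Defensive.
Import Order.TTheory GRing.Theory Num.Theory.
Local Open Scope ring_scope.

Section Defs.
Variable V : finType.

Definition is_complex (K : {set {set V}}) : Prop :=
  set0 \notin K /\
  forall s t : {set V}, s \in K -> t \subset s -> t != set0 -> t \in K.

Definition subcomplex (L K : {set {set V}}) : Prop :=
  is_complex L /\ L \subset K.

Definition principal (K : {set {set V}}) (p : {set V}) : bool :=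
  (p \in K) && [forall s in K, ~~ (p \proper s)].

Definition free_face (K : {set {set V}}) (f p : {set V}) : bool :=
  [&& principal K p, f \proper p &
      [forall s in K, (f \proper s) ==> (s == p)]].

Definition IM (K C S : {set {set V}}) : {set {set V}} :=
  [set s in K | (s \notin C) && (s \notin S)].

Definition assocS (K : {set {set V}}) (S0 : {set V}) : {set {set V}} :=
  [set s in K | s \subset S0].
Definition assocC (K : {set {set V}}) (S0 : {set V}) : {set {set V}} :=
  [set s in K | s \subset ~: S0].

Definition elem_int_collapse (K C S : {set {set V}}) (f p : {set V}) : Prop :=
  [/\ p \in IM K C S,
      principal K p,
      free_face K f p &
      forall t, t \in S -> t \proper p -> t \proper f].

(* Geometric realization: points are barycentric-coordinate functions
   V -> R.  x lies in the closed geometric simplex |s|. *)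
Definition in_simplex (R : realType) (s : {set V}) (x : V -> R) : Prop :=
  (forall w, 0 <= x w) /\ (forall w, w \notin s -> x w = 0) /\
  \sum_(w : V) x w = 1.

Definition in_real (R : realType) (L : {set {set V}}) (x : V -> R) : Prop :=
  exists2 s, s \in L & in_simplex s x.

(* On |p|, in coordinates (x_1,..,x_m) = barycentric coordinates at the
   vertices of f (v |-> 0), H(x,t) = (1-t)x + t r(x) with
   r(x) = (x_i - min_j x_j)_i.  In barycentric coordinates: the coordinate
   at a vertex of f decreases by t*min, that at the remaining vertex v of p
   increases by t*m*min (so that coordinates still sum to 1).
   The min is taken over the (nonempty) set f; the seed 1 of the big min is
   harmless since barycentric coordinates are <= 1.
   Outside |p|, H(x,t) = x. *)
Definition fmin (R : realType) (f : {set V}) (x : V -> R) : R :=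
  \big[Num.min/1]_(w in f) x w.

Definition H (R : realType) (f p : {set V}) (x : V -> R) (t : R) : V -> R :=
  fun w =>
    if `[< in_simplex p x >] then
      if w \in f then x w - t * fmin f x
      else if w \in p then x w + t * #|f|%:R * fmin f x
      else x w
    else x w.

End Defs.

From mathcomp Require Import all_boot all_order all_algebra.
From mathcomp Require Import boolp reals.
Set Implicit Arguments. Unset Strict Implicit. Unset Printing Implicit Defensive.
Import Order.TTheory GRing.Theory Num.Theory.
Local Open Scope ring_scope.

(* The free face [f] of [p] is a facet, [p = v |: f], and condition (iv) of the
   collapse forces [p :&: S0 \proper f]; hence the apex [v] and some vertex of [f]
   lie outside [S0].  H_t moves only points of |p| with all coordinates on [f]
   positive, so it moves no point of |S|; and a moved point stays in |p| while
   gaining positive weight on [v], so its image avoids |S|. *)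

Section FreeFace.
Variables (V : finType) (K : {set {set V}}) (f p : {set V}).
Hypotheses (complexK : is_complex K) (free_fp : free_face K f p).

Lemma free_face_apex : exists2 v, v \notin f & p = v |: f.
Proof.
case/and3P: free_fp => /andP[pK _] fp /forallP only_p.
have [v] : exists v, v \in p :\: f.
  by apply/set0Pn; rewrite setD_eq0; case/andP: fp.
rewrite inE => /andP[vNf vp]; exists v => //.
have vfK : v |: f \in K.
  case: complexK => _ closedK; apply: (closedK p) => //.
    by rewrite subUset sub1set vp (proper_sub fp).
  by apply/set0Pn; exists v; rewrite setU11.
have := only_p (v |: f); rewrite vfK properUr ?sub1set //=.
by move=> /eqP.
Qed.

End FreeFace.

Section AssociatedCollapse.
Variables (V : finType) (K : {set {set V}}) (S0 f p : {set V}).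
Hypotheses (complexK : is_complex K)
  (collapse : elem_int_collapse K (assocC K S0) (assocS K S0) f p).

(* [p :&: S0] is the largest face of [p] in [S]; condition (iv) pushes it into [f]. *)
Lemma collapse_trace_proper_face : p :&: S0 \proper f.
Proof.
case: collapse => + _ _ faces_in_f; rewrite !inE => /and3P[pK pNC pNS].
rewrite pK /= in pNC pNS; apply: faces_in_f.
  rewrite inE subsetIr andbT; case: complexK => _ closedK.
  apply: (closedK p) => //; first exact: subsetIl.
  by move: pNC; apply: contra; rewrite setI_eq0 disjoints_subset.
by rewrite properEneq subsetIl andbT; apply: contraNneq pNS => <-; exact: subsetIr.
Qed.

Lemma collapse_apex_notin_S0 v : v \in p -> v \notin f -> v \notin S0.
Proof.
move=> vp; apply: contra => vS0; apply: (subsetP (proper_sub collapse_trace_proper_face)).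
by rewrite inE vp.
Qed.

Lemma collapse_face_notin_S0 : exists2 w, w \in f & w \notin S0.
Proof.
case: collapse => _ _ /and3P[_ /proper_sub fp _] _.
have [_ [w wf]] := properP collapse_trace_proper_face.
by rewrite inE (subsetP fp w wf) /= => wNS0; exists w.
Qed.

End AssociatedCollapse.

Lemma in_real_assocS_zero (V : finType) (R : realType) (K : {set {set V}})
    (S0 : {set V}) (x : V -> R) w :
  in_real (assocS K S0) x -> w \notin S0 -> x w = 0.
Proof.
case=> s; rewrite inE => /andP[_ sS0] [_ [outside_s _]] wNS0.
by apply: outside_s; apply: contra wNS0; apply/subsetP.
Qed.

Section Retraction.
Variables (V : finType) (R : realType) (f p : {set V}).

Lemma fmin_le (x : V -> R) w : w \in f -> fmin f x <= x w.
Proof. exact: bigmin_le_cond. Qed.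

Lemma fmin_ge0 (x : V -> R) : (forall w, 0 <= x w) -> 0 <= fmin f x.
Proof. by move=> x_ge0; apply: le_bigmin. Qed.

Lemma H_moved (x : V -> R) t : 0 <= t ->
  H f p x t <> x -> [/\ in_simplex p x, 0 < t & 0 < fmin f x].
Proof.
move=> t_ge0; rewrite /H; case: (asboolP (in_simplex p x)) => // xp.
have m_ge0 : 0 <= fmin f x by apply: fmin_ge0; case: xp.
have [tm0 | tm_neq0] := eqVneq (t * fmin f x) 0.
  case; apply/funext => w; rewrite mulrAC tm0 mul0r subr0 addr0.
  by do 2?case: ifP.
by move: tm_neq0; rewrite mulf_eq0 negb_or !lt_def t_ge0 m_ge0 => /andP[-> ->].
Qed.

Variable v : V.
Hypotheses (vNf : v \notin f) (p_apex : p = v |: f).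

Lemma H_in_simplexE (x : V -> R) t w : in_simplex p x ->
  H f p x t w = x w - (t * fmin f x) *+ (w \in f) + (t * fmin f x) *+ #|f| *+ (w == v).
Proof.
move=> xp; rewrite /H asboolT // p_apex !inE mulrAC mulr_natr.
case: (eqVneq w v) => [-> | wNv]; first by rewrite (negbTE vNf) subr0.
by case: (w \in f); rewrite ?subr0 addr0.
Qed.

Lemma H_in_simplex (x : V -> R) t :
  0 <= t <= 1 -> in_simplex p x -> in_simplex p (H f p x t).
Proof.
move=> /andP[t_ge0 t_le1] xp; have [x_ge0 [x_out x_sum]] := xp.
have tm_ge0 : 0 <= t * fmin f x by rewrite mulr_ge0 ?fmin_ge0.
split; [|split].
- move=> w; rewrite H_in_simplexE //; apply: addr_ge0; last by rewrite mulrn_wge0 ?mulrn_wge0.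
  rewrite mulrb subr_ge0; case: ifP => [wf | _]; last exact: x_ge0.
  by rewrite (le_trans _ (fmin_le x wf)) // -[leRHS]mul1r ler_wpM2r ?fmin_ge0.
- move=> w wNp; rewrite H_in_simplexE // x_out //.
  by move: wNp; rewrite p_apex !inE negb_or => /andP[/negbTE-> /negbTE->]; rewrite subr0 addr0.
- under eq_bigr do rewrite H_in_simplexE //.
  rewrite big_split sumrB /= x_sum.
  under [X in 1 - X]eq_bigr do rewrite mulrb.
  under [X in _ + X]eq_bigr do rewrite mulrb.
  by rewrite -!big_mkcond big_pred1_eq sumr_const subrK.
Qed.

Lemma H_apex_gt0 (x : V -> R) t : f != set0 ->
  in_simplex p x -> 0 < t * fmin f x -> 0 < H f p x t v.
Proof.
move=> fn0 xp tm_gt0; have [x_ge0 _] := xp.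
rewrite H_in_simplexE // eqxx (negbTE vNf) subr0 mulr1n.
by rewrite ltr_wpDl ?x_ge0 // mulrn_wgt0 // card_gt0.
Qed.

End Retraction.

Theorem lemma5p5 (V : finType) (R : realType) (K : {set {set V}})
  (S0 : {set V}) (f p : {set V}) :
  is_complex K ->
  elem_int_collapse K (assocC K S0) (assocS K S0) f p ->
  forall t : R, 0 <= t <= 1 ->
    (forall x : V -> R, in_real K x -> ~ in_real (assocS K S0) x ->
       in_real K (H f p x t) /\ ~ in_real (assocS K S0) (H f p x t)) /\
    (forall x : V -> R, in_real (assocS K S0) x ->
       in_real (assocS K S0) (H f p x t)).
Proof.
move=> complexK collapse t t01; have [t_ge0 _] := andP t01.
have [/andP[pK _] free_fp] : principal K p /\ free_face K f p by case: collapse.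
have [v vNf p_apex] := free_face_apex complexK free_fp.
have [w wf wNS0] := collapse_face_notin_S0 complexK collapse.
split=> x; have [-> // | /(H_moved t_ge0)[xp t_gt0 m_gt0]] := pselect (H f p x t = x).
- move=> _ _; have Hxp := H_in_simplex vNf p_apex t01 xp.
  split; first by exists p.
  have vp : v \in p by rewrite p_apex setU11.
  have vNS0 := collapse_apex_notin_S0 complexK collapse vp vNf.
  have fn0 : f != set0 by apply/set0Pn; exists w.
  move=> /in_real_assocS_zero /(_ vNS0) Hv0.
  by have := H_apex_gt0 vNf p_apex fn0 xp (mulr_gt0 t_gt0 m_gt0); rewrite Hv0 ltxx.
- move=> /in_real_assocS_zero /(_ wNS0) xw0.
  by have := lt_le_trans m_gt0 (fmin_le x wf); rewrite xw0 ltxx.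
Qed.
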